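(* Consider the binary adder MAC and, for $\alpha\in[0,\frac12]$, the auxiliary channel $p_\alpha(u|y)$ from $\mathcal Y=\{0,1,2\}$ to $\mathcal U=\{0,1\}$ with $p_\alpha(0|0)=1-\alpha$, $p_\alpha(1|0)=\alpha$, $p_\alpha(0|1)=p_\alpha(1|1)=\frac12$, $p_\alpha(1|2)=1-\alpha$, $p_\alpha(0|2)=\alpha$. For bit-pipe capacities $C_1,C_2\ge0$, consider the optimization $$\max_{p(x_1,x_2)}\ \min_{0\le\alpha\le\frac12}\ \min\left\{\begin{array}{l} C_1+C_2,\\ C_1+I(X_2;Y|X_1),\\ C_2+I(X_1;Y|X_2),\\ I(X_1X_2;Y),\\ \tfrac12\big(C_1+C_2+I(X_1X_2;Y|U)+I(X_1;U|X_2)+I(X_2;U|X_1)\big)\end{array}\right\}$$ over pmfs $p(x_1,x_2)$ on $\{0,1\}^2$, with quantities evaluated for $p(x_1,x_2)p(y|x_1,x_2)p_\alpha(u|y)$. Then there is an optimizing $p(x_1,x_2)$ that is a doubly symmetric binary source.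
   Context: The binary adder MAC has $\mathcal X_1=\mathcal X_2=\{0,1\}$, $\mathcal Y=\{0,1,2\}$ and $Y=X_1+X_2$ (deterministically). A pair $(X_1,X_2)$ is a doubly symmetric binary source with parameter $p$ if $p(0,0)=p(1,1)=\frac{1-p}{2}$ and $p(0,1)=p(1,0)=\frac p2$. Logarithms base 2. *)

From Stdlib Require Import Reals List Arith.
Import ListNotations.
Open Scope R_scope.

Definition b2n (b : bool) : nat := if b then 1%nat else 0%nat.
Definition adder (x1 x2 : bool) : nat := (b2n x1 + b2n x2)%nat.

Definition is_pmf2 (p : bool -> bool -> R) : Prop :=
  (forall a b, 0 <= p a b) /\
  p false false + p false true + p true false + p true true = 1.

Definition dsbs (q : R) (a b : bool) : R :=
  if Bool.eqb a b then (1 - q) / 2 else q / 2.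

(** Auxiliary channel p_alpha(u|y), u in {0,1} encoded as bool (true = 1). *)
Definition aux_chan (alpha : R) (y : nat) (u : bool) : R :=
  match y with
  | O => if u then alpha else 1 - alpha
  | 1%nat => / 2
  | _ => if u then 1 - alpha else alpha
  end.

(** Sample space of (x1, x2, u); y = adder x1 x2 is determined. *)
Definition omegas : list (bool * bool * bool) :=
  [ (false,false,false); (false,false,true); (false,true,false); (false,true,true);
    (true,false,false); (true,false,true); (true,true,false); (true,true,true) ].

Definition joint (p : bool -> bool -> R) (alpha : R) (w : bool * bool * bool) : R :=
  let '(x1, x2, u) := w in p x1 x2 * aux_chan alpha (adder x1 x2) u.

(** A set of variables among (X1, X2, Y, U), given by inclusion flags;
    its value at an outcome is injectively coded as a nat < 24. *)
Record vars := Vars { vX1 : bool; vX2 : bool; vY : bool; vU : bool }.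

Definition vunion (A B : vars) : vars :=
  Vars (vX1 A || vX1 B) (vX2 A || vX2 B) (vY A || vY B) (vU A || vU B).

Definition code (S : vars) (w : bool * bool * bool) : nat :=
  let '(x1, x2, u) := w in
  ((if vX1 S then b2n x1 else 0) + 2 * (if vX2 S then b2n x2 else 0)
   + 4 * (if vY S then adder x1 x2 else 0) + 12 * (if vU S then b2n u else 0))%nat.

Definition prob_eq (P : bool * bool * bool -> R) (S : vars) (v : nat) : R :=
  fold_right Rplus 0
    (map (fun w => if Nat.eq_dec (code S w) v then P w else 0) omegas).

Definition plogp (x : R) : R := if Rle_dec x 0 then 0 else x * (ln x / ln 2).

Definition Ent (P : bool * bool * bool -> R) (S : vars) : R :=
  - fold_right Rplus 0 (map (fun v => plogp (prob_eq P S v)) (seq 0 24)).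

Definition CMI (P : bool * bool * bool -> R) (A B C : vars) : R :=
  Ent P (vunion A C) + Ent P (vunion B C) - Ent P (vunion (vunion A B) C) - Ent P C.

Definition V0  := Vars false false false false.
Definition VX1 := Vars true false false false.
Definition VX2 := Vars false true false false.
Definition VX12 := Vars true true false false.
Definition VY  := Vars false false true false.
Definition VU  := Vars false false false true.

Definition obj (C1 C2 : R) (p : bool -> bool -> R) (alpha : R) : R :=
  let P := joint p alpha in
  Rmin (C1 + C2)
  (Rmin (C1 + CMI P VX2 VY VX1)
  (Rmin (C2 + CMI P VX1 VY VX2)
  (Rmin (CMI P VX12 VY V0)
        (/ 2 * (C1 + C2 + CMI P VX12 VY VU + CMI P VX1 VU VX2 + CMI P VX2 VU VX1))))).

Definition is_min_alpha (C1 C2 : R) (p : bool -> bool -> R) (v : R) : Prop :=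
  (forall a, 0 <= a <= / 2 -> v <= obj C1 C2 p a) /\
  (forall w, (forall a, 0 <= a <= / 2 -> w <= obj C1 C2 p a) -> w <= v).

(* For fixed alpha every term of the inner minimum is concave in the input pmf: it is a
   nonnegative combination of grouped entropies (x + y) H(x / (x + y)), jointly concave by the
   log-sum inequality, minus a term linear in p.  Every term is also invariant under complementing
   both inputs, since Y -> 2 - Y together with U -> 1 - U leaves the auxiliary channel unchanged.
   Averaging p with its complement therefore does not decrease the objective, and the average is
   the doubly symmetric binary source with q = p(0,1) + p(1,0).  It remains to optimise over q:
   the objective is continuous in q for each alpha, so q |-> inf_alpha is upper semicontinuous on
   [0, 1] and its supremum is attained at a cluster point of a maximising sequence. *)

From Stdlib Require Import Reals Lra Classical ClassicalEpsilon FunctionalExtensionality.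
Open Scope R_scope.

Lemma ln2_pos : 0 < ln 2.
Proof. pose proof ln_lt_2; lra. Qed.

Lemma ln_le_sub1 x : 0 < x -> ln x <= x - 1.
Proof. intros Hx. pose proof (exp_ineq1_le (ln x)) as H. rewrite exp_ln in H; lra. Qed.

Lemma ln_le_mono x y : 0 < x -> x <= y -> ln x <= ln y.
Proof. intros Hx [Hlt | <-]; [left; apply ln_increasing | right]; auto. Qed.

Lemma plogp_nonpos x : x <= 0 -> plogp x = 0.
Proof. intros Hx. unfold plogp. destruct (Rle_dec x 0); [reflexivity | lra]. Qed.

Lemma plogp_pos x : 0 < x -> plogp x = x * (ln x / ln 2).
Proof. intros Hx. unfold plogp. destruct (Rle_dec x 0); [lra | reflexivity]. Qed.

Lemma plogp_0 : plogp 0 = 0.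
Proof. apply plogp_nonpos; lra. Qed.

Lemma plogp_mul x k : 0 <= x -> 0 <= k -> plogp (x * k) = x * plogp k + k * plogp x.
Proof.
  intros [Hx | <-] [Hk | <-]; rewrite ?Rmult_0_l, ?Rmult_0_r, ?plogp_0; try ring.
  rewrite !plogp_pos, ln_mult by (try apply Rmult_lt_0_compat; lra).
  field. pose proof ln2_pos; lra.
Qed.

Definition xlogratio (x s : R) : R :=
  if Rle_dec x 0 then 0 else x * (ln s - ln x) / ln 2.

Lemma xlogratio_0 s : xlogratio 0 s = 0.
Proof. unfold xlogratio. destruct (Rle_dec 0 0); [reflexivity | lra]. Qed.

Lemma xlogratio_pos x s : 0 < x -> xlogratio x s = x * (ln s - ln x) / ln 2.
Proof. intros Hx. unfold xlogratio. destruct (Rle_dec x 0); [lra | reflexivity]. Qed.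

Lemma plogp_xlogratio x s : 0 <= x -> 0 < s -> plogp x = x * (ln s / ln 2) - xlogratio x s.
Proof.
  intros [Hx | <-] Hs.
  - rewrite plogp_pos, xlogratio_pos by lra. field. pose proof ln2_pos; lra.
  - rewrite plogp_0, xlogratio_0. ring.
Qed.

Lemma xlogratio_mono_r x s s' : 0 < x <= s -> s <= s' -> xlogratio x s <= xlogratio x s'.
Proof.
  intros [Hx Hxs] Hss. rewrite !xlogratio_pos by lra.
  pose proof ln2_pos. pose proof (ln_le_mono s s' ltac:(lra) Hss).
  unfold Rdiv. apply Rmult_le_compat_r; [left; apply Rinv_0_lt_compat; lra | nra].
Qed.

Lemma gibbs_ineq x s X S : 0 < x -> 0 < s -> 0 < X -> 0 < S ->
  x * (ln s - ln x) <= x * (ln S - ln X) + (s * X / S - x).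
Proof.
  intros Hx Hs HX HS.
  set (r := s * X / (x * S)).
  assert (Hr : 0 < r) by (unfold r, Rdiv; apply Rmult_lt_0_compat;
    [ | apply Rinv_0_lt_compat]; apply Rmult_lt_0_compat; lra).
  assert (Hln : ln r = ln s + ln X - ln x - ln S).
  { unfold r, Rdiv. rewrite ln_mult, ln_Rinv, !ln_mult; try ring;
      try apply Rinv_0_lt_compat; try apply Rmult_lt_0_compat; lra. }
  pose proof (ln_le_sub1 r Hr) as Hle.
  assert (Hxr : x * r = s * X / S) by (unfold r; field; lra).
  assert (0 <= x * (r - 1 - ln r)) by (apply Rmult_le_pos; lra).
  rewrite <- Hxr.
  replace (ln s - ln x) with (ln S - ln X + ln r) by lra.
  lra.
Qed.

Lemma log_sum_ineq x1 s1 x2 s2 : 0 <= x1 <= s1 -> 0 <= x2 <= s2 ->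
  xlogratio x1 s1 + xlogratio x2 s2 <= xlogratio (x1 + x2) (s1 + s2).
Proof.
  intros [[H1 | <-] Hs1] [[H2 | <-] Hs2];
    rewrite ?Rplus_0_l, ?Rplus_0_r, ?xlogratio_0, ?Rplus_0_l, ?Rplus_0_r.
  - rewrite !xlogratio_pos by lra. pose proof ln2_pos.
    pose proof (gibbs_ineq x1 s1 (x1 + x2) (s1 + s2)) as G1.
    pose proof (gibbs_ineq x2 s2 (x1 + x2) (s1 + s2)) as G2.
    assert (Hsum : s1 * (x1 + x2) / (s1 + s2) + s2 * (x1 + x2) / (s1 + s2) = x1 + x2)
      by (field; lra).
    unfold Rdiv. rewrite <- Rmult_plus_distr_r.
    apply Rmult_le_compat_r; [left; apply Rinv_0_lt_compat |]; lra.
  - apply xlogratio_mono_r; lra.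
  - rewrite Rplus_comm. apply xlogratio_mono_r; lra.
  - lra.
Qed.

(* (x + y) H(x / (x + y)) in bits: the entropy of the unnormalised mass vector (x, y). *)
Definition uent2 (x y : R) : R := plogp (x + y) - plogp x - plogp y.

Definition uent3 (x y z : R) : R := plogp (x + y + z) - plogp x - plogp y - plogp z.

Lemma uent3_chain x y z : uent3 x y z = uent2 x y + uent2 (x + y) z.
Proof. unfold uent3, uent2. ring. Qed.

Lemma uent2_comm x y : uent2 x y = uent2 y x.
Proof. unfold uent2. rewrite Rplus_comm. ring. Qed.

Lemma uent3_rev x y z : uent3 x y z = uent3 z y x.
Proof. unfold uent3. replace (z + y + x) with (x + y + z) by ring. ring. Qed.

Lemma uent2_xlogratio x y : 0 <= x -> 0 <= y ->
  uent2 x y = xlogratio x (x + y) + xlogratio y (x + y).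
Proof.
  intros Hx Hy. unfold uent2. destruct (Req_dec (x + y) 0) as [E | E].
  - replace x with 0 by lra. replace y with 0 by lra.
    rewrite Rplus_0_l, plogp_0, xlogratio_0. ring.
  - rewrite (plogp_xlogratio x (x + y)), (plogp_xlogratio y (x + y)), (plogp_pos (x + y))
      by lra.
    ring.
Qed.

Lemma uent2_superadditive x1 y1 x2 y2 : 0 <= x1 -> 0 <= y1 -> 0 <= x2 -> 0 <= y2 ->
  uent2 x1 y1 + uent2 x2 y2 <= uent2 (x1 + x2) (y1 + y2).
Proof.
  intros. rewrite !uent2_xlogratio by lra.
  replace (x1 + x2 + (y1 + y2)) with ((x1 + y1) + (x2 + y2)) by ring.
  pose proof (log_sum_ineq x1 (x1 + y1) x2 (x2 + y2)).
  pose proof (log_sum_ineq y1 (x1 + y1) y2 (x2 + y2)).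
  lra.
Qed.

Lemma uent2_homogeneous k x y : 0 <= k -> 0 <= x -> 0 <= y ->
  uent2 (k * x) (k * y) = k * uent2 x y.
Proof.
  intros. unfold uent2. rewrite <- Rmult_plus_distr_l, !plogp_mul by lra. ring.
Qed.

Lemma uent2_midpoint_concave x1 y1 x2 y2 x y :
  0 <= x1 -> 0 <= y1 -> 0 <= x2 -> 0 <= y2 -> x = (x1 + x2) / 2 -> y = (y1 + y2) / 2 ->
  uent2 x1 y1 + uent2 x2 y2 <= 2 * uent2 x y.
Proof.
  intros ? ? ? ? -> ->.
  replace ((x1 + x2) / 2) with (/ 2 * (x1 + x2)) by field.
  replace ((y1 + y2) / 2) with (/ 2 * (y1 + y2)) by field.
  rewrite uent2_homogeneous by lra.
  pose proof (uent2_superadditive x1 y1 x2 y2). field_simplify; lra.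
Qed.

Lemma uent3_midpoint_concave x1 y1 z1 x2 y2 z2 x y z :
  0 <= x1 -> 0 <= y1 -> 0 <= z1 -> 0 <= x2 -> 0 <= y2 -> 0 <= z2 ->
  x = (x1 + x2) / 2 -> y = (y1 + y2) / 2 -> z = (z1 + z2) / 2 ->
  uent3 x1 y1 z1 + uent3 x2 y2 z2 <= 2 * uent3 x y z.
Proof.
  intros. rewrite !uent3_chain.
  pose proof (uent2_midpoint_concave x1 y1 x2 y2 x y).
  pose proof (uent2_midpoint_concave (x1 + y1) z1 (x2 + y2) z2 (x + y) z).
  lra.
Qed.

Definition pmf_of (a b c d : R) (x1 x2 : bool) : R :=
  if x1 then (if x2 then d else c) else (if x2 then b else a).

Ltac unfold_info :=
  cbv [CMI V0 VX1 VX2 VX12 VY VU Ent prob_eq omegas code joint vunion vX1 vX2 vY vU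
       b2n adder List.map List.fold_right List.seq orb pmf_of];
  cbn [Nat.add Nat.mul Nat.eq_dec nat_rec nat_rect aux_chan];
  rewrite ?Rplus_0_l, ?Rplus_0_r, ?plogp_0, ?Rplus_0_l, ?Rplus_0_r.

Ltac plogp_ring :=
  repeat match goal with
  | |- ?L = ?R =>
    match R with
    | context [plogp ?y] =>
      match L with
      | context [plogp ?x] =>
        tryif constr_eq x y then fail
        else replace (plogp x) with (plogp y) by (f_equal; lra)
      end
    end
  end;
  ring.

(* In each formula the second group is the image of the first under complementing
   (x1, x2, u), i.e. under a <-> d, b <-> c, u <-> 1 - u. *)
Section MassVector.
Variables (a b c d al : R).
Hypotheses (Ha : 0 <= a) (Hb : 0 <= b) (Hc : 0 <= c) (Hd : 0 <= d) (Hal : 0 <= al <= 1).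
Let P := joint (pmf_of a b c d) al.

Lemma cmi_X2_Y_X1 : CMI P VX2 VY VX1 = uent2 a b + uent2 d c.
Proof. unfold P. unfold_info. unfold uent2. plogp_ring. Qed.

Lemma cmi_X1_Y_X2 : CMI P VX1 VY VX2 = uent2 a c + uent2 d b.
Proof. unfold P. unfold_info. unfold uent2. plogp_ring. Qed.

Lemma cmi_X12_Y : CMI P VX12 VY V0 = uent3 a (b + c) d.
Proof. unfold P. unfold_info. unfold uent3. plogp_ring. Qed.

Lemma cmi_X12_Y_U : CMI P VX12 VY VU =
  uent3 (a * (1 - al)) ((b + c) / 2) (d * al) + uent3 (d * (1 - al)) ((b + c) / 2) (a * al).
Proof. unfold P. unfold_info. unfold uent3. plogp_ring. Qed.

Let cond_ent_U := (a + d) * uent2 (1 - al) al + (b + c) * uent2 (/ 2) (/ 2).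

Lemma cond_ent_U_eq : cond_ent_U = uent2 (a * (1 - al)) (a * al) + uent2 (b * / 2) (b * / 2)
  + uent2 (c * / 2) (c * / 2) + uent2 (d * (1 - al)) (d * al).
Proof. unfold cond_ent_U. rewrite !uent2_homogeneous by lra. ring. Qed.

Lemma cmi_X1_U_X2 : CMI P VX1 VU VX2 =
  uent2 (a * (1 - al) + c / 2) (a * al + c / 2) + uent2 (d * (1 - al) + b / 2) (d * al + b / 2)
  - cond_ent_U.
Proof. rewrite cond_ent_U_eq. unfold P. unfold_info. unfold uent2. plogp_ring. Qed.

Lemma cmi_X2_U_X1 : CMI P VX2 VU VX1 =
  uent2 (a * (1 - al) + b / 2) (a * al + b / 2) + uent2 (d * (1 - al) + c / 2) (d * al + c / 2)
  - cond_ent_U.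
Proof. rewrite cond_ent_U_eq. unfold P. unfold_info. unfold uent2. plogp_ring. Qed.

End MassVector.

Ltac mass_arith := subst; first [field | nra].

Lemma Rmin_le_compat x1 x2 y1 y2 : x1 <= y1 -> x2 <= y2 -> Rmin x1 x2 <= Rmin y1 y2.
Proof.
  intros. apply (Rle_trans _ (Rmin y1 x2)); [apply Rle_min_compat_r | apply Rle_min_compat_l];
  assumption.
Qed.

Lemma obj_le_obj_symmetrized C1 C2 a b c d m n al :
  0 <= a -> 0 <= b -> 0 <= c -> 0 <= d -> 0 <= al <= 1 ->
  m = (a + d) / 2 -> n = (b + c) / 2 ->
  obj C1 C2 (pmf_of a b c d) al <= obj C1 C2 (pmf_of m n n m) al.
Proof.
  intros Ha Hb Hc Hd Hal Hm Hn.
  unfold obj; cbv zeta.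
  rewrite !cmi_X2_Y_X1, !cmi_X1_Y_X2, !cmi_X12_Y, !cmi_X12_Y_U, !cmi_X1_U_X2, !cmi_X2_U_X1
    by lra.
  assert (H_X2_X1 : uent2 a b + uent2 d c <= 2 * uent2 m n)
    by (apply uent2_midpoint_concave; mass_arith).
  assert (H_X1_X2 : uent2 a c + uent2 d b <= 2 * uent2 m n)
    by (apply uent2_midpoint_concave; mass_arith).
  assert (H_Y : uent3 a (b + c) d + uent3 d (b + c) a <= 2 * uent3 m (n + n) m)
    by (apply uent3_midpoint_concave; mass_arith).
  rewrite (uent3_rev d) in H_Y.
  assert (H_Y_U : uent3 (a * (1 - al)) ((b + c) / 2) (d * al)
             + uent3 (d * (1 - al)) ((b + c) / 2) (a * al)
             <= 2 * uent3 (m * (1 - al)) ((n + n) / 2) (m * al))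
    by (apply uent3_midpoint_concave; mass_arith).
  assert (H_U_X2 : uent2 (a * (1 - al) + c / 2) (a * al + c / 2)
             + uent2 (d * (1 - al) + b / 2) (d * al + b / 2)
             <= 2 * uent2 (m * (1 - al) + n / 2) (m * al + n / 2))
    by (apply uent2_midpoint_concave; mass_arith).
  assert (H_U_X1 : uent2 (a * (1 - al) + b / 2) (a * al + b / 2)
             + uent2 (d * (1 - al) + c / 2) (d * al + c / 2)
             <= 2 * uent2 (m * (1 - al) + n / 2) (m * al + n / 2))
    by (apply uent2_midpoint_concave; mass_arith).
  replace ((m + m) * uent2 (1 - al) al) with ((a + d) * uent2 (1 - al) al) by (f_equal; lra).
  replace ((n + n) * uent2 (/ 2) (/ 2)) with ((b + c) * uent2 (/ 2) (/ 2)) by (f_equal; lra).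
  repeat apply Rmin_le_compat; lra.
Qed.

Section ContinuityRules.
Variables (f g : R -> R) (x : R).
Hypotheses (Hf : continuity_pt f x) (Hg : continuity_pt g x).

Lemma cont_plus : continuity_pt (fun y => f y + g y) x.
Proof. exact (continuity_pt_plus f g x Hf Hg). Qed.
Lemma cont_minus : continuity_pt (fun y => f y - g y) x.
Proof. exact (continuity_pt_minus f g x Hf Hg). Qed.
Lemma cont_mult : continuity_pt (fun y => f y * g y) x.
Proof. exact (continuity_pt_mult f g x Hf Hg). Qed.
Lemma cont_opp : continuity_pt (fun y => - f y) x.
Proof. exact (continuity_pt_opp f x Hf). Qed.
End ContinuityRules.

Lemma cont_const (k x : R) : continuity_pt (fun _ => k) x.
Proof. apply continuity_pt_const. now intros ? ?. Qed.

Lemma cont_id (x : R) : continuity_pt (fun y => y) x.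
Proof. exact (derivable_continuous_pt _ _ (derivable_pt_id x)). Qed.

Lemma cont_min (f g : R -> R) (x : R) : continuity_pt f x -> continuity_pt g x ->
  continuity_pt (fun y => Rmin (f y) (g y)) x.
Proof.
  intros Hf Hg.
  apply (continuity_pt_locally_ext (fun y => (f y + g y - Rabs (f y - g y)) * / 2) _ 1 x);
    [lra | | ].
  - intros y _. unfold Rmin. destruct (Rle_dec (f y) (g y)).
    + rewrite Rabs_left1 by lra. field.
    + rewrite Rabs_right by lra. field.
  - apply cont_mult; [ | apply cont_const].
    apply cont_minus; [apply cont_plus; assumption |].
    exact (continuity_pt_comp _ Rabs x (cont_minus f g x Hf Hg) (Rcontinuity_abs _)).
Qed.

(* From -ln s <= 1/s - 1 at s = sqrt y. *)
Lemma plogp_abs_le_sqrt y : 0 < y <= 1 -> Rabs (plogp y) <= 2 * sqrt y / ln 2.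
Proof.
  intros [Hy Hy1]. pose proof ln2_pos.
  set (s := sqrt y).
  assert (Hs : 0 < s) by (apply sqrt_lt_R0; lra).
  assert (Hss : s * s = y) by (apply sqrt_sqrt; lra).
  assert (Hs1 : s <= 1) by nra.
  assert (Hlns : - ln s <= / s - 1).
  { rewrite <- ln_Rinv by lra. apply ln_le_sub1, Rinv_0_lt_compat; lra. }
  assert (Hlns0 : ln s <= 0) by (pose proof (ln_le_sub1 s Hs); lra).
  assert (Hslns : - (s * ln s) <= 1 - s).
  { replace (1 - s) with (s * (/ s - 1)) by (field; lra). nra. }
  rewrite plogp_pos, <- Hss, ln_mult by lra.
  replace (s * s * ((ln s + ln s) / ln 2)) with (2 * s * (s * ln s) / ln 2) by (field; lra).
  rewrite Rabs_left1.
  - unfold Rdiv. rewrite Ropp_mult_distr_l.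
    apply Rmult_le_compat_r; [left; apply Rinv_0_lt_compat; lra | nra].
  - unfold Rdiv. rewrite <- (Rmult_0_l (/ ln 2)).
    apply Rmult_le_compat_r; [left; apply Rinv_0_lt_compat; lra | nra].
Qed.

Lemma plogp_continuous_0 : continuity_pt plogp 0.
Proof.
  intros eps Heps. pose proof ln2_pos.
  set (k := eps * ln 2 / 2).
  assert (Hk : 0 < k) by (unfold k; apply Rmult_lt_0_compat; [apply Rmult_lt_0_compat |]; lra).
  exists (Rmin 1 (k * k)). split; [apply Rmin_glb_lt; [lra | apply Rmult_lt_0_compat; lra] |].
  intros y [_ Hy]. simpl in *. unfold R_dist in *. rewrite plogp_0, Rminus_0_r in *.
  destruct (Rle_dec y 0) as [Hy0 | Hy0].
  - rewrite plogp_nonpos, Rabs_R0 by lra. exact Heps.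
  - rewrite Rabs_right in Hy by lra.
    pose proof (Rmin_l 1 (k * k)). pose proof (Rmin_r 1 (k * k)).
    assert (Hsqrt : sqrt y < k).
    { rewrite <- (sqrt_square k) by lra. apply sqrt_lt_1; nra. }
    pose proof (plogp_abs_le_sqrt y ltac:(lra)).
    apply (Rle_lt_trans _ (2 * sqrt y / ln 2)); [assumption |].
    apply (Rmult_lt_reg_r (ln 2)); [lra |]. unfold Rdiv. rewrite Rmult_assoc, Rinv_l by lra.
    unfold k in Hsqrt. lra.
Qed.

Lemma plogp_continuous x : continuity_pt plogp x.
Proof.
  destruct (Rtotal_order x 0) as [Hx | [-> | Hx]].
  - apply (continuity_pt_locally_ext (fun _ => 0) plogp (- x) x); [lra | | apply cont_const].
    intros y Hy. unfold Rdist in Hy. pose proof (Rle_abs (y - x)).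
    rewrite plogp_nonpos; lra.
  - exact plogp_continuous_0.
  - apply (continuity_pt_locally_ext (fun y => y * (ln y / ln 2)) plogp x x); [lra | |].
    + intros y Hy. unfold Rdist in Hy. pose proof (Rle_abs (x - y)).
      rewrite Rabs_minus_sym in Hy. rewrite plogp_pos; lra.
    + apply cont_mult; [apply cont_id |]. unfold Rdiv. apply cont_mult; [| apply cont_const].
      exact (derivable_continuous_pt ln x (exist _ (/ x) (derivable_pt_lim_ln x Hx))).
Qed.

Lemma cont_plogp (f : R -> R) (x : R) :
  continuity_pt f x -> continuity_pt (fun y => plogp (f y)) x.
Proof. intros Hf. exact (continuity_pt_comp f plogp x Hf (plogp_continuous (f x))). Qed.

Lemma cont_fold_sum {A : Type} (l : list A) (F : R -> A -> R) (x : R) :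
  (forall a, continuity_pt (fun q => F q a) x) ->
  continuity_pt (fun q => List.fold_right Rplus 0 (List.map (F q) l)) x.
Proof.
  intros HF. induction l as [| a l IH]; cbn [List.map List.fold_right].
  - apply cont_const.
  - apply cont_plus; [apply HF | exact IH].
Qed.

Section ContinuousFamily.
Variables (p : R -> bool -> bool -> R) (al x : R).
Hypothesis Hp : forall x1 x2, continuity_pt (fun q => p q x1 x2) x.

Lemma Ent_continuous S : continuity_pt (fun q => Ent (joint (p q) al) S) x.
Proof.
  unfold Ent. apply cont_opp, cont_fold_sum. intro v. apply cont_plogp.
  unfold prob_eq. apply cont_fold_sum. intros [[x1 x2] u].
  destruct (Nat.eq_dec _ v); [ | apply cont_const].
  apply cont_mult; [apply Hp | apply cont_const].
Qed.

Lemma CMI_continuous A B C : continuity_pt (fun q => CMI (joint (p q) al) A B C) x.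
Proof.
  unfold CMI. apply cont_minus; [apply cont_minus; [apply cont_plus |] |]; apply Ent_continuous.
Qed.

Lemma obj_continuous C1 C2 : continuity_pt (fun q => obj C1 C2 (p q) al) x.
Proof.
  unfold obj; cbv zeta.
  repeat first [ apply CMI_continuous | apply cont_min | apply cont_plus | apply cont_mult
               | apply cont_const ].
Qed.
End ContinuousFamily.

Lemma dsbs_continuous x1 x2 x : continuity_pt (fun q => dsbs q x1 x2) x.
Proof.
  unfold dsbs, Rdiv. destruct (Bool.eqb x1 x2); apply cont_mult; try apply cont_const;
    [apply cont_minus; [apply cont_const | apply cont_id] | apply cont_id].
Qed.

Lemma cluster_point_in_interval (u : nat -> R) (l lo hi : R) :
  ValAdh u l -> (forall n, lo <= u n <= hi) -> lo <= l <= hi.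
Proof.
  intros Hl Hu.
  assert (Hout : forall r, 0 < r -> exists p, Rabs (u p - l) < r).
  { intros r Hr. destruct (Hl (disc l (mkposreal r Hr)) 0%nat) as [p [_ Hp]].
    - exists (mkposreal r Hr). intros y Hy; exact Hy.
    - exists p. exact Hp. }
  split; apply Rnot_lt_le; intro Hc.
  - destruct (Hout (lo - l) ltac:(lra)) as [p Hp].
    pose proof (Rle_abs (u p - l)). specialize (Hu p). lra.
  - destruct (Hout (l - hi) ltac:(lra)) as [p Hp].
    pose proof (Rle_abs (l - u p)). rewrite Rabs_minus_sym in Hp. specialize (Hu p). lra.
Qed.

Lemma le_at_cluster_point (u : nat -> R) (f : R -> R) (l lo hi S : R) :
  (forall x, lo <= x <= hi -> continuity_pt f x) -> (forall n, lo <= u n <= hi) ->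
  ValAdh u l -> (forall n, S - / (INR n + 1) < f (u n)) -> S <= f l.
Proof.
  intros Hf Hu Hl HS.
  pose proof (cluster_point_in_interval u l lo hi Hl Hu) as Hlin.
  apply Rnot_lt_le. intro Hlt.
  set (eps := (S - f l) / 2). assert (Heps : 0 < eps) by (unfold eps; lra).
  destruct (Heine_cor2 Hf (mkposreal eps Heps)) as [d Hd]; simpl in Hd.
  destruct (archimed_cor1 eps Heps) as [N [HN HN0]].
  destruct (Hl (disc l d) N) as [p [HNp Hp]].
  { exists d. intros y Hy; exact Hy. }
  specialize (Hd (u p) l (Hu p) Hlin Hp).
  specialize (HS p).
  assert (/ (INR p + 1) <= / INR N).
  { apply Rinv_le_contravar; [apply lt_0_INR; exact HN0 |].
    apply le_INR in HNp. lra. }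
  pose proof (Rle_abs (f (u p) - f l)). unfold eps in *. lra.
Qed.

Lemma sup_inf_attained (g : R -> R -> R) (A : R -> Prop) (a0 lo hi : R) :
  lo <= hi -> A a0 ->
  (forall a x, A a -> lo <= x <= hi -> continuity_pt (fun q => g q a) x) ->
  exists qs, lo <= qs <= hi /\
    forall q w, lo <= q <= hi -> (forall a, A a -> w <= g q a) ->
    forall a, A a -> w <= g qs a.
Proof.
  intros Hlohi Ha0 Hg.
  set (E := fun w => exists q, lo <= q <= hi /\ forall a, A a -> w <= g q a).
  destruct (classic (exists w, E w)) as [HE | HE].
  2: { exists lo. split; [lra |]. intros q w Hq Hw. exfalso. apply HE. exists w, q. auto. }
  assert (HEb : bound E).
  { destruct (continuity_ab_maj (fun q => g q a0) lo hi Hlohi (fun x => Hg a0 x Ha0))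
      as [M [HM _]].
    exists (g M a0). intros w [q [Hq Hw]]. specialize (HM q Hq). specialize (Hw a0 Ha0). lra. }
  destruct (completeness E HEb HE) as [S [HSub HSleast]].
  assert (Happrox : forall n : nat, exists q, lo <= q <= hi /\
            forall a, A a -> S - / (INR n + 1) < g q a).
  { intro n.
    assert (Hpos : 0 < / (INR n + 1))
      by (apply Rinv_0_lt_compat; pose proof (pos_INR n); lra).
    apply NNPP. intro Hno.
    assert (Hub : is_upper_bound E (S - / (INR n + 1))).
    { intros w [q [Hq Hw]]. apply Rnot_lt_le. intro Hlt. apply Hno.
      exists q. split; [exact Hq |]. intros a Ha. specialize (Hw a Ha). lra. }
    specialize (HSleast _ Hub). lra. }
  destruct (choice _ Happrox) as [u Hu].
  destruct (Bolzano_Weierstrass u (fun x => lo <= x <= hi) (compact_P3 lo hi)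
              (fun n => proj1 (Hu n))) as [l Hl].
  exists l. split; [exact (cluster_point_in_interval u l lo hi Hl (fun n => proj1 (Hu n))) |].
  intros q w Hq Hw a Ha.
  apply (Rle_trans _ S); [apply HSub; exists q; auto |].
  apply (le_at_cluster_point u (fun q => g q a) l lo hi S (fun x => Hg a x Ha)); auto.
  - intro n. apply (Hu n).
  - intro n. apply (Hu n), Ha.
Qed.

Lemma obj_le_obj_dsbs C1 C2 p al : is_pmf2 p -> 0 <= al <= 1 ->
  obj C1 C2 p al <= obj C1 C2 (dsbs (p false true + p true false)) al.
Proof.
  intros [Hnn Hsum] Hal.
  set (q := p false true + p true false).
  assert (Hp : p = pmf_of (p false false) (p false true) (p true false) (p true true)).
  { extensionality x1; extensionality x2. now destruct x1, x2. }
  assert (Hq : dsbs q = pmf_of ((1 - q) / 2) (q / 2) (q / 2) ((1 - q) / 2)).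
  { extensionality x1; extensionality x2. now destruct x1, x2. }
  rewrite Hp at 1. rewrite Hq.
  pose proof (Hnn false false). pose proof (Hnn false true).
  pose proof (Hnn true false). pose proof (Hnn true true).
  apply obj_le_obj_symmetrized; unfold q; lra.
Qed.

Theorem lemma2 (C1 C2 : R) (hC1 : 0 <= C1) (hC2 : 0 <= C2) :
  exists q : R, 0 <= q <= 1 /\
    forall (p : bool -> bool -> R), is_pmf2 p ->
    forall vp vq : R,
      is_min_alpha C1 C2 p vp -> is_min_alpha C1 C2 (dsbs q) vq -> vp <= vq.
Proof.
  destruct (sup_inf_attained (fun q al => obj C1 C2 (dsbs q) al) (fun al => 0 <= al <= / 2)
              0 0 1) as [qs [Hqs Hmax]];
    [lra | lra | intros; apply obj_continuous; intros; apply dsbs_continuous |].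
  exists qs. split; [exact Hqs |].
  intros p Hp vp vq [Hvp _] [_ Hvq]. apply Hvq. intros al Hal.
  pose proof Hp as [Hnn Hsum].
  apply (Hmax (p false true + p true false) vp); [ | | exact Hal].
  - pose proof (Hnn false false). pose proof (Hnn false true).
    pose proof (Hnn true false). pose proof (Hnn true true). lra.
  - intros a Ha. apply (Rle_trans _ _ _ (Hvp a Ha)).
    apply obj_le_obj_dsbs; [exact Hp | lra].
Qed.
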